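(* Let $\mathcal G$ be a graph and $\mathcal F_a\mathcal G$ the free AU-bigroupoid on $\mathcal G$. For any two 1-cells $u,v:A\to B$ of $\mathcal F_a\mathcal G$ there is at most one 2-cell $u\Rightarrow v$.
   Context: A graph $\mathcal G$ consists of a set $\mathcal G_0$ of nodes and, for each $A,B\in\mathcal G_0$, a set $\mathcal G(A,B)$ of edges; a graph morphism consists of a function on nodes and functions on edge sets compatible with sources and targets. A bigroupoid consists of a set of 0-cells, hom-groupoids $\mathcal B(A,B)$ (objects: 1-cells; arrows: 2-cells), composition functors $*$, identity 1-cells $1_A$, inversion functors $(-)^*$ and natural isomorphisms $\mathbf a:(h*g)*f\Rightarrow h*(g*f)$, $\mathbf l:1*f\Rightarrow f$, $\mathbf r:f*1\Rightarrow f$, $\mathbf e:f^**f\Rightarrow 1$, $\mathbf i:1\Rightarrow f*f^*$ satisfying the pentagon, $(\mathrm{id}*\mathbf l)\circ\mathbf a=\mathbf r*\mathrm{id}$, and $\mathbf r_f\circ(\mathrm{id}*\mathbf e_f)\circ\mathbf a\circ(\mathbf i_f*\mathrm{id})=\mathbf l_f$. A strict morphism of bigroupoids preserves all this structure on the nose. An AU-bigroupoid is a bigroupoid in which $\mathbf a,\mathbf l,\mathbf r$ are identities. Every bigroupoid has an underlying graph (0-cells and 1-cells). The free AU-bigroupoid $\mathcal F_a\mathcal G$ comes with a graph morphism $I_a:\mathcal G\to\mathcal F_a\mathcal G$ such that for every AU-bigroupoid $\mathcal B$ and graph morphism $F:\mathcal G\to\mathcal B$ there is a unique strict morphism $\widetilde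 F:\mathcal F_a\mathcal G\to\mathcal B$ with $\widetilde F I_a=F$. (Concretely: 0-cells are the nodes of $\mathcal G$; 1-cells are formal words in edges, identities, $*$ and $(-)^*$ modulo strict associativity and unitality; 2-cells are generated by $\mathbf e_f,\mathbf i_f$, their inverses and identities under $*$, $(-)^*$, $\circ$, modulo the bigroupoid axioms.) *)

Record Graph := {
  node : Type;
  edge : node -> node -> Type
}.

Record GraphMor (G H : Graph) := {
  gm0 : node G -> node H;
  gm1 : forall A B : node G, edge G A B -> edge H (gm0 A) (gm0 B)
}.
Arguments gm0 {G H} _ _.
Arguments gm1 {G H} _ {A B} _.

Definition gcomp {G H K : Graph} (F2 : GraphMor H K) (F1 : GraphMor G H)
  : GraphMor G K :=
  {| gm0 := fun A => gm0 F2 (gm0 F1 A);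
     gm1 := fun A B e => gm1 F2 (gm1 F1 e) |}.

(* ---------- Bigroupoids ----------
   hc g f  = g * f  (f : A -> B, g : B -> C)
   vcomp b a = b o a (vertical composition, a first)
   asc = a, lu = l, ru = r, ev = e, co = i, inv1/inv2 = (-)^* *)
Record Bigroupoid := {
  obj : Type;
  hom : obj -> obj -> Type;
  cell : forall {A B : obj}, hom A B -> hom A B -> Type;
  vid : forall {A B} (f : hom A B), cell f f;
  vcomp : forall {A B} {f g h : hom A B}, cell g h -> cell f g -> cell f h;
  vinv : forall {A B} {f g : hom A B}, cell f g -> cell g f;
  vcompA : forall A B (f g h k : hom A B) (c : cell h k) (b : cell g h) (a : cell f g),
      vcomp c (vcomp b a) = vcomp (vcomp c b) a;
  vcomp1l : forall A B (f g : hom A B) (a : cell f g), vcomp (vid g) a = a;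
  vcomp1r : forall A B (f g : hom A B) (a : cell f g), vcomp a (vid f) = a;
  vinvl : forall A B (f g : hom A B) (a : cell f g), vcomp (vinv a) a = vid f;
  vinvr : forall A B (f g : hom A B) (a : cell f g), vcomp a (vinv a) = vid g;
  hc : forall {A B C}, hom B C -> hom A B -> hom A C;
  hc2 : forall {A B C} {g g' : hom B C} {f f' : hom A B},
      cell g g' -> cell f f' -> cell (hc g f) (hc g' f');
  hc2_id : forall A B C (g : hom B C) (f : hom A B),
      hc2 (vid g) (vid f) = vid (hc g f);
  hc2_comp : forall A B C (g g' g'' : hom B C) (f f' f'' : hom A B)
      (b : cell g g') (b' : cell g' g'') (a : cell f f') (a' : cell f' f''),
      hc2 (vcomp b' b) (vcomp a' a) = vcomp (hc2 b' a') (hc2 b a);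
  id1 : forall A, hom A A;
  inv1 : forall {A B}, hom A B -> hom B A;
  inv2 : forall {A B} {f g : hom A B}, cell f g -> cell (inv1 f) (inv1 g);
  inv2_id : forall A B (f : hom A B), inv2 (vid f) = vid (inv1 f);
  inv2_comp : forall A B (f g h : hom A B) (a : cell f g) (b : cell g h),
      inv2 (vcomp b a) = vcomp (inv2 b) (inv2 a);
  asc : forall {A B C D} (h : hom C D) (g : hom B C) (f : hom A B),
      cell (hc (hc h g) f) (hc h (hc g f));
  asc_nat : forall A B C D (h h' : hom C D) (g g' : hom B C) (f f' : hom A B)
      (c : cell h h') (b : cell g g') (a : cell f f'),
      vcomp (asc h' g' f') (hc2 (hc2 c b) a) = vcomp (hc2 c (hc2 b a)) (asc h g f);
  lu : forall {A B} (f : hom A B), cell (hc (id1 B) f) f;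
  lu_nat : forall A B (f f' : hom A B) (a : cell f f'),
      vcomp (lu f') (hc2 (vid (id1 B)) a) = vcomp a (lu f);
  ru : forall {A B} (f : hom A B), cell (hc f (id1 A)) f;
  ru_nat : forall A B (f f' : hom A B) (a : cell f f'),
      vcomp (ru f') (hc2 a (vid (id1 A))) = vcomp a (ru f);
  ev : forall {A B} (f : hom A B), cell (hc (inv1 f) f) (id1 A);
  ev_nat : forall A B (f g : hom A B) (a : cell f g),
      vcomp (ev g) (hc2 (inv2 a) a) = ev f;
  co : forall {A B} (f : hom A B), cell (id1 B) (hc f (inv1 f));
  co_nat : forall A B (f g : hom A B) (a : cell f g),
      vcomp (hc2 a (inv2 a)) (co f) = co g;
  pentagon : forall A B C D E (k : hom D E) (h : hom C D) (g : hom B C) (f : hom A B),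
      vcomp (hc2 (vid k) (asc h g f))
            (vcomp (asc k (hc h g) f) (hc2 (asc k h g) (vid f)))
      = vcomp (asc k h (hc g f)) (asc (hc k h) g f);
  triangle : forall A B C (g : hom B C) (f : hom A B),
      vcomp (hc2 (vid g) (lu f)) (asc g (id1 B) f) = hc2 (ru g) (vid f);
  inverse_ax : forall A B (f : hom A B),
      vcomp (ru f) (vcomp (hc2 (vid f) (ev f))
                          (vcomp (asc f (inv1 f) f) (hc2 (co f) (vid f))))
      = lu f
}.



Arguments vid {b0 A B} f.
Arguments vcomp {b0 A B f g h} _ _.
Arguments hc {b0 A B C} _ _.
Arguments hc2 {b0 A B C g g' f f'} _ _.
Arguments inv1 {b0 A B} _.
Arguments inv2 {b0 A B f g} _.
Arguments asc {b0 A B C D} h g f.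
Arguments lu {b0 A B} f.
Arguments ru {b0 A B} f.
Arguments ev {b0 A B} f.
Arguments co {b0 A B} f.

Definition cell_of_eq {X : Bigroupoid} {A B : obj X} {f g : hom X A B} (p : f = g)
  : cell X f g :=
  match p in _ = g' return cell X f g' with eq_refl => vid f end.

(* AU-bigroupoid: a, l, r are identities (so the relevant 1-cells coincide). *)
Definition isAU (X : Bigroupoid) : Prop :=
  (forall (A B C D : obj X) (h : hom X C D) (g : hom X B C) (f : hom X A B),
      exists p : hc (hc h g) f = hc h (hc g f), asc h g f = cell_of_eq p) /\
  (forall (A B : obj X) (f : hom X A B),
      exists p : hc (id1 X B) f = f, lu f = cell_of_eq p) /\
  (forall (A B : obj X) (f : hom X A B),
      exists p : hc f (id1 X A) = f, ru f = cell_of_eq p).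

Definition cell_heq {X : Bigroupoid} {A B : obj X} {f g f' g' : hom X A B}
  (a : cell X f g) (b : cell X f' g') : Prop :=
  exists (p : f = f') (q : g = g'), vcomp (cell_of_eq q) a = vcomp b (cell_of_eq p).

Record StrictMor (X Y : Bigroupoid) := {
  sm0 : obj X -> obj Y;
  sm1 : forall {A B : obj X}, hom X A B -> hom Y (sm0 A) (sm0 B);
  sm2 : forall {A B : obj X} {f g : hom X A B}, cell X f g -> cell Y (sm1 f) (sm1 g);
  sm_hc : forall A B C (g : hom X B C) (f : hom X A B), sm1 (hc g f) = hc (sm1 g) (sm1 f);
  sm_id1 : forall A, sm1 (id1 X A) = id1 Y (sm0 A);
  sm_inv1 : forall A B (f : hom X A B), sm1 (inv1 f) = inv1 (sm1 f);
  sm_vid : forall A B (f : hom X A B), sm2 (vid f) = vid (sm1 f);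
  sm_vcomp : forall A B (f g h : hom X A B) (b : cell X g h) (a : cell X f g),
      sm2 (vcomp b a) = vcomp (sm2 b) (sm2 a);
  sm_hc2 : forall A B C (g g' : hom X B C) (f f' : hom X A B) (b : cell X g g') (a : cell X f f'),
      cell_heq (sm2 (hc2 b a)) (hc2 (sm2 b) (sm2 a));
  sm_inv2 : forall A B (f g : hom X A B) (a : cell X f g),
      cell_heq (sm2 (inv2 a)) (inv2 (sm2 a));
  sm_asc : forall A B C D (h : hom X C D) (g : hom X B C) (f : hom X A B),
      cell_heq (sm2 (asc h g f)) (asc (sm1 h) (sm1 g) (sm1 f));
  sm_lu : forall A B (f : hom X A B), cell_heq (sm2 (lu f)) (lu (sm1 f));
  sm_ru : forall A B (f : hom X A B), cell_heq (sm2 (ru f)) (ru (sm1 f));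
  sm_ev : forall A B (f : hom X A B), cell_heq (sm2 (ev f)) (ev (sm1 f));
  sm_co : forall A B (f : hom X A B), cell_heq (sm2 (co f)) (co (sm1 f))
}.
Arguments sm0 {X Y} _ _.
Arguments sm1 {X Y} _ {A B} _.
Arguments sm2 {X Y} _ {A B f g} _.

Definition underlying (X : Bigroupoid) : Graph :=
  {| node := obj X; edge := hom X |}.

Definition sm_graph {X Y : Bigroupoid} (F : StrictMor X Y)
  : GraphMor (underlying X) (underlying Y) :=
  @Build_GraphMor (underlying X) (underlying Y) (sm0 F) (fun A B f => sm1 F f).

Definition is_free_AU_bigroupoid (G : Graph) (Fa : Bigroupoid)
  (Ia : GraphMor G (underlying Fa)) : Prop :=
  isAU Fa /\
  forall (B : Bigroupoid), isAU B ->
  forall (F : GraphMor G (underlying B)),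
    exists! Ft : StrictMor Fa B, gcomp (sm_graph Ft) Ia = F.

(* Coherence by a thin replacement.  Fix an AU-bigroupoid X and choose a
   representative in every connected component of every hom-groupoid X(Y, A).
   A normalized 1-cell A -> B is a 1-cell u together with, for each chosen
   representative r : Y -> A, a 2-cell from u * r to the representative of the
   component of u * r; a normalized 2-cell is a 2-cell of X compatible with these
   data.  Taking for r the representative of the component of 1_A and using that
   whiskering by a 1-cell isomorphic to 1_A is faithful, there is at most one
   normalized 2-cell between two normalized 1-cells.  Normalized cells form an
   AU-bigroupoid with a strict forgetful morphism to X.  For X = F_a G, freeness
   forces (forget o lift) to be the identity, so any two parallel 2-cells of
   F_a G are images of parallel 2-cells of a thin bigroupoid, hence equal. *)

From Stdlib Require Import ProofIrrelevance FunctionalExtensionality PropExtensionality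
  IndefiniteDescription.

Section HeterogeneousCellEquality.
Context {X : Bigroupoid}.

Definition transport2 {A B : obj X} {f g f' g' : hom X A B} (p : f = f') (q : g = g')
  (a : cell X f g) : cell X f' g' :=
  match p in _ = f0 return cell X f0 g' with eq_refl =>
    match q in _ = g0 return cell X f g0 with eq_refl => a end end.

(* Equivalent to [cell_heq] (see [cell_heq_iff_heq]) but transports instead of
   composing with [cell_of_eq], so that it can simply be destructed. *)
Definition heq {A B : obj X} {f g f' g' : hom X A B} (a : cell X f g) (b : cell X f' g')
  : Prop :=
  exists (p : f = f') (q : g = g'), transport2 p q a = b.

Lemma heq_refl {A B} {f g : hom X A B} (a : cell X f g) : heq a a.
Proof. exists eq_refl, eq_refl. reflexivity. Qed.

Lemma heq_eq {A B} {f g : hom X A B} (a b : cell X f g) : heq a b -> a = b.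
Proof.
  intros [p [q H]].
  rewrite (proof_irrelevance _ p eq_refl), (proof_irrelevance _ q eq_refl) in H. exact H.
Qed.

Lemma heq_sym {A B} {f g f' g' : hom X A B} (a : cell X f g) (b : cell X f' g') :
  heq a b -> heq b a.
Proof. intros [p [q H]]. destruct p, q. subst. apply heq_refl. Qed.

Lemma heq_trans {A B} {f g f' g' f'' g'' : hom X A B} (a : cell X f g) (b : cell X f' g')
  (c : cell X f'' g'') : heq a b -> heq b c -> heq a c.
Proof. intros [p [q H]] [p' [q' H']]. destruct p, q, p', q'. subst. apply heq_refl. Qed.

Lemma heq_vcomp {A B} {f g h f' g' h' : hom X A B} (a : cell X f g) (b : cell X g h)
  (a' : cell X f' g') (b' : cell X g' h') :
  heq a a' -> heq b b' -> heq (vcomp b a) (vcomp b' a').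
Proof.
  intros [p [q H]] [p' [q' H']]. destruct p, q.
  rewrite (proof_irrelevance _ p' eq_refl) in H'. destruct q'. subst. apply heq_refl.
Qed.

Lemma heq_hc2 {A B C} {g g' g2 g2' : hom X B C} {f f' f2 f2' : hom X A B}
  (b : cell X g g') (a : cell X f f') (b2 : cell X g2 g2') (a2 : cell X f2 f2') :
  heq b b2 -> heq a a2 -> heq (hc2 b a) (hc2 b2 a2).
Proof. intros [p [q H]] [p' [q' H']]. destruct p, q, p', q'. subst. apply heq_refl. Qed.

Lemma heq_vinv {A B} {f g f' g' : hom X A B} (a : cell X f g) (b : cell X f' g') :
  heq a b -> heq (vinv X a) (vinv X b).
Proof. intros [p [q H]]. destruct p, q. subst. apply heq_refl. Qed.

Lemma heq_cell_of_eq {A B} {f g : hom X A B} (p : f = g) : heq (cell_of_eq p) (vid f).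
Proof. destruct p. apply heq_refl. Qed.

Lemma heq_vid {A B} {f g : hom X A B} (p : f = g) : heq (vid f) (vid g).
Proof. destruct p. apply heq_refl. Qed.

Lemma heq_vcomp_cell_of_eq {A B} {f g h : hom X A B} (p : g = h) (a : cell X f g) :
  heq (vcomp (cell_of_eq p) a) a.
Proof. destruct p. simpl. rewrite vcomp1l. apply heq_refl. Qed.

Lemma heq_vcomp_idl {A B} {f g h k : hom X A B} (a : cell X f g) (b : cell X g h) :
  heq b (vid k) -> heq (vcomp b a) a.
Proof.
  intros [p [q H]]. destruct p, q. simpl in H. subst. rewrite vcomp1l. apply heq_refl.
Qed.

Lemma heq_vcomp_idr {A B} {f g h k : hom X A B} (a : cell X f g) (b : cell X g h) :
  heq a (vid k) -> heq (vcomp b a) b.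
Proof.
  intros [p [q H]]. destruct p, q. simpl in H. subst. rewrite vcomp1r. apply heq_refl.
Qed.

Lemma heq_vid_trans {A B} {f g f' g' k k' : hom X A B} (a : cell X f g) (b : cell X f' g') :
  heq a (vid k) -> heq b (vid k') -> f = f' -> heq a b.
Proof.
  intros Ha Hb E. eapply heq_trans; [exact Ha|]. apply heq_sym. eapply heq_trans; [exact Hb|].
  destruct Ha as [p [q _]], Hb as [p' [q' _]]. apply heq_vid. congruence.
Qed.

Lemma heq_family {T : Type} {A B : obj X} (F1 F2 : T -> hom X A B)
  (M : forall t, cell X (F1 t) (F2 t)) (t t' : T) : t = t' -> heq (M t) (M t').
Proof. intros ->. apply heq_refl. Qed.

Lemma cell_heq_iff_heq {A B} {f g f' g' : hom X A B} (a : cell X f g) (b : cell X f' g') :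
  cell_heq a b <-> heq a b.
Proof.
  split.
  - intros [p [q H]]. destruct p, q. simpl in H. rewrite vcomp1l, vcomp1r in H. subst.
    apply heq_refl.
  - intros [p [q H]]. destruct p, q. simpl in H. subst. exists eq_refl, eq_refl. simpl.
    rewrite vcomp1l, vcomp1r. reflexivity.
Qed.

End HeterogeneousCellEquality.


Section BigroupoidFacts.
Context {X : Bigroupoid}.

Lemma vinv_unique {A B} {f g : hom X A B} (a : cell X f g) (b : cell X g f) :
  vcomp b a = vid f -> b = vinv X a.
Proof.
  intros H. rewrite <- (vcomp1r _ _ _ _ _ b), <- (vinvr _ _ _ _ _ a).
  rewrite vcompA, H, vcomp1l. reflexivity.
Qed.

Lemma vcomp_cancel_l {A B} {f g h : hom X A B} (n : cell X g h) (a b : cell X f g) :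
  vcomp n a = vcomp n b -> a = b.
Proof.
  intros H. rewrite <- (vcomp1l _ _ _ _ _ a), <- (vcomp1l _ _ _ _ _ b),
    <- (vinvl _ _ _ _ _ n), <- !vcompA, H. reflexivity.
Qed.

Lemma vinv_vcomp {A B} {f g h : hom X A B} (a : cell X f g) (b : cell X g h) :
  vinv X (vcomp b a) = vcomp (vinv X a) (vinv X b).
Proof.
  symmetry. apply vinv_unique.
  rewrite <- vcompA, (vcompA _ _ _ _ _ _ _ (vinv X b)), vinvl, vcomp1l, vinvl. reflexivity.
Qed.

Lemma heq_vinv_vid {A B} {f g : hom X A B} (a : cell X f g) :
  heq a (vid f) -> heq (vinv X a) (vid g).
Proof.
  intros [p [q H]]. destruct q. rewrite (proof_irrelevance _ p eq_refl) in H. simpl in H.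
  subst. rewrite <- (vinv_unique _ _ (vcomp1l _ _ _ _ _ (vid _))). apply heq_refl.
Qed.

Lemma hc2_split {A B C} {g g' : hom X B C} {f f' : hom X A B} (b : cell X g g')
  (a : cell X f f') : hc2 b a = vcomp (hc2 b (vid f')) (hc2 (vid g) a).
Proof. rewrite <- hc2_comp, vcomp1r, vcomp1l. reflexivity. Qed.

Lemma hc2_vcompr {A B C} (g : hom X B C) {f f' f'' : hom X A B} (a : cell X f f')
  (a' : cell X f' f'') :
  hc2 (vid g) (vcomp a' a) = vcomp (hc2 (vid g) a') (hc2 (vid g) a).
Proof. rewrite <- hc2_comp, vcomp1r. reflexivity. Qed.

Lemma hc2_vcompl {A B C} {g g' g'' : hom X B C} (f : hom X A B) (b : cell X g g')
  (b' : cell X g' g'') :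
  hc2 (vcomp b' b) (vid f) = vcomp (hc2 b' (vid f)) (hc2 b (vid f)).
Proof. rewrite <- hc2_comp, vcomp1r. reflexivity. Qed.

Lemma vinv_asc_nat {A B C D : obj X} {h h' : hom X C D} {g g' : hom X B C}
  {f f' : hom X A B} (c : cell X h h') (b : cell X g g') (a : cell X f f') :
  vcomp (vinv X (asc h' g' f')) (hc2 c (hc2 b a))
  = vcomp (hc2 (hc2 c b) a) (vinv X (asc h g f)).
Proof.
  apply (vcomp_cancel_l (asc h' g' f')).
  rewrite !vcompA, vinvr, vcomp1l, asc_nat, <- vcompA, vinvr, vcomp1r. reflexivity.
Qed.

Lemma hc2_cell_of_eq_nat {A B Y : obj X} {u v : hom X B A} (x : cell X u v)
  {r r' : hom X Y B} (q : r = r') :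
  vcomp (cell_of_eq (f_equal (hc v) q)) (hc2 x (vid r))
  = vcomp (hc2 x (vid r')) (cell_of_eq (f_equal (hc u) q)).
Proof. destruct q. simpl. rewrite vcomp1l, vcomp1r. reflexivity. Qed.

End BigroupoidFacts.


Section AUBigroupoid.
Context {X : Bigroupoid} (HAU : isAU X).

Lemma hc_assoc {A B C D : obj X} (h : hom X C D) (g : hom X B C) (f : hom X A B) :
  hc (hc h g) f = hc h (hc g f).
Proof. destruct HAU as [H _]. destruct (H _ _ _ _ h g f) as [p _]. exact p. Qed.

Lemma hc_id1l {A B : obj X} (f : hom X A B) : hc (id1 X B) f = f.
Proof. destruct HAU as [_ [H _]]. destruct (H _ _ f) as [p _]. exact p. Qed.

Lemma hc_id1r {A B : obj X} (f : hom X A B) : hc f (id1 X A) = f.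
Proof. destruct HAU as [_ [_ H]]. destruct (H _ _ f) as [p _]. exact p. Qed.

Lemma heq_asc {A B C D : obj X} (h : hom X C D) (g : hom X B C) (f : hom X A B) :
  heq (asc h g f) (vid (hc (hc h g) f)).
Proof. destruct HAU as [H _]. destruct (H _ _ _ _ h g f) as [p ->]. apply heq_cell_of_eq. Qed.

Lemma heq_lu {A B : obj X} (f : hom X A B) : heq (lu f) (vid (hc (id1 X B) f)).
Proof. destruct HAU as [_ [H _]]. destruct (H _ _ f) as [p ->]. apply heq_cell_of_eq. Qed.

Lemma heq_ru {A B : obj X} (f : hom X A B) : heq (ru f) (vid (hc f (id1 X A))).
Proof. destruct HAU as [_ [_ H]]. destruct (H _ _ f) as [p ->]. apply heq_cell_of_eq. Qed.

(* Naturality of a, l and r, whose components are identities here. *)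
Lemma hc2_assoc {A B C D : obj X} {h h' : hom X C D} {g g' : hom X B C} {f f' : hom X A B}
  (c : cell X h h') (b : cell X g g') (a : cell X f f') :
  heq (hc2 (hc2 c b) a) (hc2 c (hc2 b a)).
Proof.
  apply heq_trans with (b := vcomp (asc h' g' f') (hc2 (hc2 c b) a)).
  - apply heq_sym. eapply heq_vcomp_idl. apply heq_asc.
  - rewrite asc_nat. eapply heq_vcomp_idr. apply heq_asc.
Qed.

Lemma hc2_id1l {A B : obj X} {f f' : hom X A B} (a : cell X f f') :
  heq (hc2 (vid (id1 X B)) a) a.
Proof.
  apply heq_trans with (b := vcomp (lu f') (hc2 (vid (id1 X B)) a)).
  - apply heq_sym. eapply heq_vcomp_idl. apply heq_lu.
  - rewrite lu_nat. eapply heq_vcomp_idr. apply heq_lu.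
Qed.

Lemma hc2_id1r {A B : obj X} {f f' : hom X A B} (a : cell X f f') :
  heq (hc2 a (vid (id1 X A))) a.
Proof.
  apply heq_trans with (b := vcomp (ru f') (hc2 a (vid (id1 X A)))).
  - apply heq_sym. eapply heq_vcomp_idl. apply heq_ru.
  - rewrite ru_nat. eapply heq_vcomp_idr. apply heq_ru.
Qed.

Lemma zigzag {A B : obj X} (f : hom X A B) :
  heq (vcomp (hc2 (vid f) (ev f)) (vcomp (asc f (inv1 f) f) (hc2 (co f) (vid f)))) (vid f).
Proof.
  apply heq_trans with (b := vcomp (ru f) (vcomp (hc2 (vid f) (ev f))
                          (vcomp (asc f (inv1 f) f) (hc2 (co f) (vid f))))).
  - apply heq_sym. eapply heq_vcomp_idl. apply heq_ru.
  - rewrite inverse_ax. eapply heq_trans; [apply heq_lu | apply heq_vid, hc_id1l].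
Qed.

Lemma whisker_faithful {A B : obj X} {u v : hom X A B} (r : hom X A A)
  (k : cell X (id1 X A) r) (a a' : cell X u v) :
  hc2 a (vid r) = hc2 a' (vid r) -> a = a'.
Proof.
  intros H.
  assert (E : forall b : cell X u v, hc2 b (vid (id1 X A)) =
     vcomp (hc2 (vid v) (vinv X k)) (vcomp (hc2 b (vid r)) (hc2 (vid u) k))).
  { intros b. rewrite <- !hc2_comp, !vcomp1l, vcomp1r, vinvl. reflexivity. }
  apply heq_eq. apply heq_trans with (b := hc2 a (vid (id1 X A))).
  - apply heq_sym, hc2_id1r.
  - rewrite E, H, <- E. apply hc2_id1r.
Qed.

End AUBigroupoid.


Section Components.
Context {X : Bigroupoid}.

(* Components are encoded as predicates, so that connected 1-cells have equal
   components ([component_eq]) and hence the same representative. *)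
Definition Component (Y A : obj X) : Type :=
  {P : hom X Y A -> Prop | exists u, P = fun v => inhabited (cell X u v)}.

Definition component {Y A : obj X} (u : hom X Y A) : Component Y A :=
  exist _ (fun v => inhabited (cell X u v)) (ex_intro _ u eq_refl).

Definition rep {Y A : obj X} (c : Component Y A) : hom X Y A :=
  proj1_sig (constructive_indefinite_description _ (proj2_sig c)).

Lemma rep_spec {Y A : obj X} (c : Component Y A) :
  proj1_sig c = fun v => inhabited (cell X (rep c) v).
Proof. unfold rep. destruct (constructive_indefinite_description _ _) as [u Hu]. exact Hu. Qed.

Lemma Component_ext {Y A : obj X} (c d : Component Y A) : proj1_sig c = proj1_sig d -> c = d.
Proof.
  destruct c as [P HP], d as [Q HQ]. simpl. intros ->. f_equal. apply proof_irrelevance.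
Qed.

Lemma component_eq {Y A : obj X} (u v : hom X Y A) : cell X u v -> component u = component v.
Proof.
  intros a. apply Component_ext. simpl. apply functional_extensionality. intros w.
  apply propositional_extensionality. split; intros [b]; constructor.
  - exact (vcomp b (vinv X a)).
  - exact (vcomp b a).
Qed.

Lemma component_rep {Y A : obj X} (c : Component Y A) : component (rep c) = c.
Proof. apply Component_ext. simpl. symmetry. apply rep_spec. Qed.

Definition to_rep {Y A : obj X} (u : hom X Y A) : cell X u (rep (component u)).
Proof.
  assert (H : inhabited (cell X u (rep (component u)))).
  { pose proof (f_equal (fun P => P (rep (component u))) (rep_spec (component u))) as H.
    simpl in H. rewrite H. constructor. apply vid. }
  exact (proj1_sig (constructive_indefinite_description (fun _ => True)
    (match H with inhabits x => ex_intro _ x I end))).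
Defined.

End Components.


Section NormalizedCells.
Context {X : Bigroupoid} (HAU : isAU X).

Record NHom (A B : obj X) := MkNHom {
  base1 : hom X A B;
  norm : forall (Y : obj X) (c : Component Y A),
    cell X (hc base1 (rep c)) (rep (component (hc base1 (rep c))))
}.
Arguments MkNHom {A B} _ _.
Arguments base1 {A B} _.
Arguments norm {A B} _ {Y} _.

Record NCell {A B : obj X} (U V : NHom A B) := MkNCell {
  base2 : cell X (base1 U) (base1 V);
  base2_norm : forall (Y : obj X) (c : Component Y A),
    heq (vcomp (norm V c) (hc2 base2 (vid (rep c)))) (norm U c)
}.
Arguments MkNCell {A B U V} _ _.
Arguments base2 {A B U V} _.
Arguments base2_norm {A B U V} _ _ _.

Lemma heq_norm {A B} (U : NHom A B) {Y} (c c' : Component Y A) :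
  c = c' -> heq (norm U c) (norm U c').
Proof. intros ->. apply heq_refl. Qed.

Lemma NHom_ext {A B : obj X} (U V : NHom A B) :
  base1 U = base1 V -> (forall Y (c : Component Y A), heq (norm U c) (norm V c)) -> U = V.
Proof.
  destruct U as [u n], V as [v m]. simpl. intros p H. destruct p. f_equal.
  apply functional_extensionality_dep. intros Y.
  apply functional_extensionality_dep. intros c. apply heq_eq, H.
Qed.

Lemma NCell_unique {A B} {U V : NHom A B} (x y : NCell U V) : x = y.
Proof.
  assert (Hbase : base2 x = base2 y).
  { set (c0 := component (id1 X A)).
    apply (whisker_faithful HAU (rep c0) (to_rep (id1 X A))).
    apply (vcomp_cancel_l (norm V c0)), heq_eq.
    eapply heq_trans; [apply (base2_norm x) | apply heq_sym, (base2_norm y)]. }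
  destruct x as [x px], y as [y py]. simpl in Hbase. subst y. f_equal.
  apply proof_irrelevance.
Qed.

Lemma rep_hc_rep {Y A B C : obj X} (g : hom X B C) (f : hom X A B) (r : hom X Y A) :
  rep (component (hc g (rep (component (hc f r))))) = rep (component (hc (hc g f) r)).
Proof.
  f_equal. apply component_eq.
  exact (vcomp (vinv X (asc g f r)) (hc2 (vid g) (vinv X (to_rep _)))).
Qed.

Lemma rep_hc_id1 {Y A : obj X} (c : Component Y A) :
  rep c = rep (component (hc (id1 X A) (rep c))).
Proof. f_equal. rewrite (component_eq _ _ (lu (rep c))). symmetry. apply component_rep. Qed.

Lemma component_hc_id1 {Y A : obj X} (c : Component Y A) :
  component (hc (id1 X A) (rep c)) = c.
Proof. rewrite (component_eq _ _ (lu (rep c))). apply component_rep. Qed.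

Lemma rep_hc_inv1 {Y A B : obj X} (u : hom X A B) (c : Component Y B) :
  rep c = rep (component (hc u (rep (component (hc (inv1 u) (rep c)))))).
Proof.
  f_equal. rewrite (component_eq _ (rep c)); [symmetry; apply component_rep|].
  exact (vcomp (lu _) (vcomp (hc2 (vinv X (co u)) (vid _)) (vcomp (vinv X (asc _ _ _))
     (hc2 (vid u) (vinv X (to_rep _)))))).
Qed.

Definition nvid {A B} (U : NHom A B) : NCell U U.
Proof.
  refine (MkNCell (vid (base1 U)) _). intros Y c. rewrite hc2_id, vcomp1r. apply heq_refl.
Defined.

Definition nvcomp {A B} {U V W : NHom A B} (b : NCell V W) (a : NCell U V) : NCell U W.
Proof.
  refine (MkNCell (vcomp (base2 b) (base2 a)) _). intros Y c.
  rewrite hc2_vcompl, vcompA.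
  apply heq_trans with (b := vcomp (norm V c) (hc2 (base2 a) (vid (rep c)))).
  - eapply heq_vcomp; [apply heq_refl | apply (base2_norm b)].
  - apply (base2_norm a).
Defined.

Definition nvinv {A B} {U V : NHom A B} (a : NCell U V) : NCell V U.
Proof.
  refine (MkNCell (vinv X (base2 a)) _). intros Y c.
  apply heq_trans with (b := vcomp (vcomp (norm V c) (hc2 (base2 a) (vid (rep c))))
                                   (hc2 (vinv X (base2 a)) (vid (rep c)))).
  - eapply heq_vcomp; [apply heq_refl | apply heq_sym, (base2_norm a)].
  - rewrite <- vcompA, <- hc2_vcompl, vinvr, hc2_id, vcomp1r. apply heq_refl.
Defined.

Definition nhc {A B C} (G : NHom B C) (F : NHom A B) : NHom A C :=
  MkNHom (hc (base1 G) (base1 F)) (fun Y c =>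
    vcomp (cell_of_eq (rep_hc_rep (base1 G) (base1 F) (rep c)))
      (vcomp (norm G (component (hc (base1 F) (rep c))))
        (vcomp (hc2 (vid (base1 G)) (norm F c)) (asc (base1 G) (base1 F) (rep c))))).

Definition nid1 (A : obj X) : NHom A A :=
  MkNHom (id1 X A) (fun Y c => vcomp (cell_of_eq (rep_hc_id1 c)) (lu (rep c))).

Definition ninv1 {A B} (F : NHom A B) : NHom B A :=
  MkNHom (inv1 (base1 F)) (fun Y c =>
    vcomp (lu _) (vcomp (hc2 (ev (base1 F)) (vid _)) (vcomp (vinv X (asc _ _ _))
      (vcomp (hc2 (vid (inv1 (base1 F)))
                  (vinv X (norm F (component (hc (inv1 (base1 F)) (rep c))))))
        (cell_of_eq (f_equal (hc (inv1 (base1 F))) (rep_hc_inv1 (base1 F) c))))))).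

Lemma nhc_id1l {A B : obj X} (F : NHom A B) : nhc (nid1 B) F = F.
Proof.
  apply NHom_ext; [apply (hc_id1l HAU)|]. intros Y c. simpl.
  eapply heq_trans; [apply heq_vcomp_cell_of_eq|].
  eapply heq_trans.
  { eapply heq_vcomp_idl. eapply heq_trans; [apply heq_vcomp_cell_of_eq | apply (heq_lu HAU)]. }
  eapply heq_trans; [eapply heq_vcomp_idr; apply (heq_asc HAU)|].
  apply (hc2_id1l HAU).
Qed.

Lemma nhc_id1r {A B : obj X} (F : NHom A B) : nhc F (nid1 A) = F.
Proof.
  apply NHom_ext; [apply (hc_id1r HAU)|]. intros Y c. simpl.
  eapply heq_trans; [apply heq_vcomp_cell_of_eq|].
  eapply heq_trans.
  { eapply heq_vcomp_idr.
    eapply heq_trans; [eapply heq_vcomp_idr; apply (heq_asc HAU)|].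
    eapply heq_trans; [eapply heq_hc2; [apply heq_refl|]|].
    - eapply heq_trans; [apply heq_vcomp_cell_of_eq | apply (heq_lu HAU)].
    - rewrite hc2_id. apply heq_refl. }
  apply heq_norm, component_hc_id1.
Qed.

Lemma nhc_assoc {A B C D : obj X} (H : NHom C D) (G : NHom B C) (F : NHom A B) :
  nhc (nhc H G) F = nhc H (nhc G F).
Proof.
  apply NHom_ext; [apply (hc_assoc HAU)|]. intros Y c. simpl.
  set (h := base1 H). set (g := base1 G). set (f := base1 F). set (r := rep c).
  set (k := component (hc f r)).
  (* both normalizations reduce to normalizing f, then g, then h *)
  set (core := vcomp (norm H (component (hc g (rep k))))
                 (vcomp (hc2 (vid h) (norm G k)) (hc2 (vid h) (hc2 (vid g) (norm F c))))).
  apply heq_trans with (b := core).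
  - eapply heq_trans; [apply heq_vcomp_cell_of_eq|].
    eapply heq_trans; [eapply heq_vcomp; [apply heq_refl | apply heq_vcomp_cell_of_eq]|].
    pose proof (asc_nat X _ _ _ _ h h g g (hc f r) (rep k) (vid h) (vid g) (norm F c)) as E.
    rewrite hc2_id in E.
    rewrite <- !vcompA, (vcompA _ _ _ _ _ _ _ (asc h g _)), E, <- vcompA.
    unfold core. eapply heq_vcomp; [|apply heq_refl]. eapply heq_vcomp; [|apply heq_refl].
    eapply heq_vcomp_idr. eapply heq_trans; [eapply heq_vcomp_idl|]; apply (heq_asc HAU).
  - apply heq_sym.
    eapply heq_trans; [apply heq_vcomp_cell_of_eq|].
    eapply heq_trans.
    { eapply heq_vcomp; [eapply heq_vcomp; [apply heq_refl|]|].
      - eapply heq_hc2; [apply heq_refl | apply heq_vcomp_cell_of_eq].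
      - apply heq_norm, component_eq. exact (vcomp (hc2 (vid g) (to_rep _)) (asc g f r)). }
    rewrite !hc2_vcompr, <- !vcompA.
    unfold core. eapply heq_vcomp; [|apply heq_refl]. eapply heq_vcomp; [|apply heq_refl].
    eapply heq_vcomp_idr. eapply heq_trans; [eapply heq_vcomp_idl|apply (heq_asc HAU)].
    eapply heq_trans; [eapply heq_hc2; [apply heq_refl | apply (heq_asc HAU)]|].
    rewrite hc2_id. apply heq_refl.
Qed.

Definition nhc2 {A B C : obj X} {G G' : NHom B C} {F F' : NHom A B}
  (b : NCell G G') (a : NCell F F') : NCell (nhc G F) (nhc G' F').
Proof.
  refine (@MkNCell _ _ (nhc G F) (nhc G' F') (hc2 (base2 b) (base2 a)) _). intros Y c. simpl.
  rewrite <- vcompA. eapply heq_trans; [apply heq_vcomp_cell_of_eq|].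
  rewrite <- !vcompA, (asc_nat X _ _ _ _ _ _ _ _ _ _ (base2 b) (base2 a) (vid (rep c))).
  rewrite (vcompA _ _ _ _ _ _ _ (hc2 (vid (base1 G')) _)), <- hc2_comp, vcomp1l.
  eapply heq_trans.
  { eapply heq_vcomp; [eapply heq_vcomp; [apply heq_refl|]|].
    - eapply heq_hc2; [apply heq_refl | apply (base2_norm a)].
    - apply heq_norm, component_eq. exact (hc2 (vinv X (base2 a)) (vid (rep c))). }
  rewrite (hc2_split (base2 b)), !vcompA.
  eapply heq_vcomp; [apply heq_refl|]. eapply heq_vcomp; [apply heq_refl|].
  eapply heq_trans; [apply (base2_norm b) | apply heq_sym, heq_vcomp_cell_of_eq].
Defined.

Lemma ev_whisker_nat {A B Y : obj X} {u u' : hom X A B} (a : cell X u u')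
  (d : hom X Y A) (r : hom X Y B) (n' : cell X (hc u' d) r) :
  vcomp (hc2 (ev u') (vid d)) (vcomp (vinv X (asc (inv1 u') u' d))
     (vcomp (hc2 (vid (inv1 u')) (vinv X n')) (hc2 (inv2 a) (vid r))))
  = vcomp (hc2 (ev u) (vid d)) (vcomp (vinv X (asc (inv1 u) u d))
     (hc2 (vid (inv1 u)) (vinv X (vcomp n' (hc2 a (vid d)))))).
Proof.
  rewrite <- hc2_comp, vcomp1l, vcomp1r.
  assert (E : hc2 (inv2 a) (vinv X n') = vcomp (hc2 (inv2 a) (hc2 a (vid d)))
      (hc2 (vid (inv1 u)) (vinv X (vcomp n' (hc2 a (vid d)))))).
  { rewrite <- hc2_comp, vcomp1r, vinv_vcomp, vcompA, vinvr, vcomp1l. reflexivity. }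
  rewrite E, (vcompA _ _ _ _ _ _ _ (vinv X _)), vinv_asc_nat, <- !vcompA,
    (vcompA _ _ _ _ _ _ _ (hc2 (ev u') _)), <- hc2_comp, ev_nat, vcomp1l.
  reflexivity.
Qed.

Definition ninv2 {A B : obj X} {F F' : NHom A B} (a : NCell F F') :
  NCell (ninv1 F) (ninv1 F').
Proof.
  refine (@MkNCell _ _ (ninv1 F) (ninv1 F') (inv2 (base2 a)) _). intros Y c. simpl.
  rewrite <- !vcompA, (hc2_cell_of_eq_nat (inv2 (base2 a))).
  match goal with |- context [vcomp (hc2 (ev ?u') (vid ?d)) (vcomp (vinv X (asc _ _ _))
     (vcomp (hc2 (vid _) (vinv X ?n')) (vcomp (hc2 (inv2 ?a0) (vid ?r)) ?z)))] =>
     pose proof (f_equal (fun t => vcomp t z) (ev_whisker_nat a0 d r n')) as E;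
     simpl in E; rewrite <- !vcompA in E; rewrite E
  end.
  assert (Ec : component (hc (inv1 (base1 F')) (rep c)) = component (hc (inv1 (base1 F)) (rep c))).
  { apply component_eq. exact (hc2 (inv2 (vinv X (base2 a))) (vid (rep c))). }
  set (u := base1 F).
  eapply heq_vcomp. eapply heq_vcomp. eapply heq_vcomp. eapply heq_vcomp.
  - eapply heq_trans; [apply heq_cell_of_eq | apply heq_sym, heq_cell_of_eq].
  - eapply heq_hc2; [apply heq_refl|]. apply heq_vinv.
    eapply heq_trans; [apply (base2_norm a) | apply heq_norm, Ec].
  - apply (heq_family (fun k => hc (inv1 u) (hc u (rep k))) (fun k => hc (hc (inv1 u) u) (rep k))
      (fun k => vinv X (asc (inv1 u) u (rep k)))), Ec.
  - apply (heq_family (fun k => hc (hc (inv1 u) u) (rep k)) (fun k => hc (id1 X A) (rep k))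
      (fun k => hc2 (ev u) (vid (rep k)))), Ec.
  - apply (heq_family (fun k => hc (id1 X A) (rep k)) (fun k => rep k) (fun k => lu (rep k))), Ec.
Defined.

Lemma heq_ev_norm {Y A B : obj X} (F : NHom A B) (d c : Component Y A) (E : d = c)
  (q : rep (component (hc (base1 F) (rep c))) = rep (component (hc (base1 F) (rep d)))) :
  heq (vcomp (lu (rep c)) (hc2 (ev (base1 F)) (vid (rep c))))
    (vcomp (lu (rep d)) (vcomp (hc2 (ev (base1 F)) (vid (rep d))) (vcomp (vinv X (asc _ _ _))
      (vcomp (hc2 (vid (inv1 (base1 F))) (vinv X (norm F d)))
        (vcomp (cell_of_eq (f_equal (hc (inv1 (base1 F))) q))
          (vcomp (hc2 (vid (inv1 (base1 F))) (norm F c))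
            (asc (inv1 (base1 F)) (base1 F) (rep c)))))))).
Proof.
  destruct E. rewrite (proof_irrelevance _ q eq_refl). simpl. rewrite vcomp1l.
  rewrite (vcompA _ _ _ _ _ _ _ (hc2 (vid _) (vinv X _))), <- hc2_comp, vinvl, vcomp1l,
    hc2_id, vcomp1l, vinvl, vcomp1r.
  apply heq_refl.
Qed.

Definition nev {A B : obj X} (F : NHom A B) : NCell (nhc (ninv1 F) F) (nid1 A).
Proof.
  refine (@MkNCell _ _ (nhc (ninv1 F) F) (nid1 A) (ev (base1 F)) _). intros Y c. simpl.
  rewrite <- vcompA. eapply heq_trans; [apply heq_vcomp_cell_of_eq|].
  apply heq_sym. eapply heq_trans; [apply heq_vcomp_cell_of_eq|].
  rewrite <- !vcompA. apply heq_sym, heq_ev_norm.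
  rewrite <- (component_rep c) at 2. apply component_eq.
  exact (vcomp (lu _) (vcomp (hc2 (ev (base1 F)) (vid _)) (vcomp (vinv X (asc _ _ _))
     (hc2 (vid _) (vinv X (to_rep _)))))).
Defined.

Lemma heq_co_norm {Y A B : obj X} (u : hom X A B) (d : hom X Y A) (r : hom X Y B)
  (n : cell X (hc u d) r) :
  heq (vcomp n (vcomp (hc2 (vid u) (vcomp (lu d) (vcomp (hc2 (ev u) (vid d))
         (vcomp (vinv X (asc (inv1 u) u d)) (hc2 (vid (inv1 u)) (vinv X n))))))
        (vcomp (asc u (inv1 u) r) (hc2 (co u) (vid r)))))
      (vid r).
Proof.
  rewrite !hc2_vcompr.
  assert (E : vcomp (hc2 (vid u) (hc2 (vid (inv1 u)) (vinv X n)))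
                 (vcomp (asc u (inv1 u) r) (hc2 (co u) (vid r)))
     = vcomp (asc u (inv1 u) (hc u d))
         (vcomp (hc2 (co u) (vid (hc u d))) (hc2 (vid (id1 X B)) (vinv X n)))).
  { rewrite vcompA, <- asc_nat, hc2_id, <- vcompA, <- !hc2_comp, !vcomp1l, !vcomp1r.
    reflexivity. }
  rewrite <- !vcompA, E.
  apply heq_trans with (b := vcomp n (vinv X n)); [|rewrite vinvr; apply heq_refl].
  eapply heq_vcomp; [|apply heq_refl].
  rewrite !vcompA. eapply heq_trans; [eapply heq_vcomp_idl|apply (hc2_id1l HAU)].
  (* what remains is the zigzag identity for u, whiskered by d *)
  apply heq_trans with (b := hc2 (vcomp (hc2 (vid u) (ev u))
                                   (vcomp (asc u (inv1 u) u) (hc2 (co u) (vid u)))) (vid d)).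
  2: { eapply heq_trans; [eapply heq_hc2; [apply (zigzag HAU) | apply heq_refl]|].
       rewrite hc2_id. apply heq_refl. }
  rewrite !hc2_vcompl, <- !vcompA.
  eapply heq_trans.
  { eapply heq_vcomp_idl.
    eapply heq_trans; [eapply heq_hc2; [apply heq_refl | apply (heq_lu HAU)]|].
    rewrite hc2_id. apply heq_refl. }
  rewrite (vcompA _ _ _ _ _ _ _ (hc2 (vid u) (vinv X _))).
  eapply heq_vcomp; [eapply heq_vcomp| apply heq_sym, (hc2_assoc HAU)].
  - eapply heq_trans; [|apply heq_sym, (hc2_assoc HAU)]. rewrite hc2_id. apply heq_refl.
  - eapply heq_vid_trans.
    + eapply heq_trans; [eapply heq_vcomp_idl|apply (heq_asc HAU)].
      eapply heq_trans; [eapply heq_hc2; [apply heq_refl | apply heq_vinv_vid, (heq_asc HAU)]|].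
      rewrite hc2_id. apply heq_refl.
    + eapply heq_trans; [eapply heq_hc2; [apply (heq_asc HAU) | apply heq_refl]|].
      rewrite hc2_id. apply heq_refl.
    + symmetry. apply (hc_assoc HAU).
Qed.

Definition nco {A B : obj X} (F : NHom A B) : NCell (nid1 B) (nhc F (ninv1 F)).
Proof.
  refine (@MkNCell _ _ (nid1 B) (nhc F (ninv1 F)) (co (base1 F)) _). intros Y c. simpl.
  apply heq_trans with (b := vid (rep c)).
  2: { apply heq_sym. eapply heq_trans; [apply heq_vcomp_cell_of_eq|].
       eapply heq_trans; [apply (heq_lu HAU) | apply heq_vid, (hc_id1l HAU)]. }
  rewrite <- !vcompA. eapply heq_trans; [apply heq_vcomp_cell_of_eq|].
  set (q := rep_hc_inv1 (base1 F) c). clearbody q.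
  revert q. generalize (norm F (component (hc (inv1 (base1 F)) (rep c)))).
  set (t := rep (component (hc (base1 F) (rep (component (hc (inv1 (base1 F)) (rep c))))))).
  clearbody t. intros n q. destruct q. simpl. rewrite vcomp1r. apply heq_co_norm.
Defined.

Definition ncell_of_eq {A B : obj X} {U V : NHom A B} (p : U = V) : NCell U V :=
  match p in _ = V0 return NCell U V0 with eq_refl => nvid U end.

End NormalizedCells.
Arguments MkNHom {X A B} _ _.
Arguments base1 {X A B} _.
Arguments norm {X A B} _ {Y} _.
Arguments MkNCell {X A B U V} _ _.
Arguments base2 {X A B U V} _.


Section ThinBigroupoid.
Context {X : Bigroupoid} (HAU : isAU X).

Definition thin : Bigroupoid := {|
  obj := obj X;
  hom := @NHom X;
  cell := fun A B U V => @NCell X A B U V;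
  vid := fun A B U => nvid U;
  vcomp := fun A B U V W b a => nvcomp b a;
  vinv := fun A B U V a => nvinv a;
  vcompA := fun _ _ _ _ _ _ _ _ _ => NCell_unique HAU _ _;
  vcomp1l := fun _ _ _ _ _ => NCell_unique HAU _ _;
  vcomp1r := fun _ _ _ _ _ => NCell_unique HAU _ _;
  vinvl := fun _ _ _ _ _ => NCell_unique HAU _ _;
  vinvr := fun _ _ _ _ _ => NCell_unique HAU _ _;
  hc := fun A B C G F => nhc G F;
  hc2 := fun A B C G G' F F' b a => nhc2 b a;
  hc2_id := fun _ _ _ _ _ => NCell_unique HAU _ _;
  hc2_comp := fun _ _ _ _ _ _ _ _ _ _ _ _ _ => NCell_unique HAU _ _;
  id1 := fun A => nid1 A;
  inv1 := fun A B F => ninv1 F;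
  inv2 := fun A B F F' a => ninv2 a;
  inv2_id := fun _ _ _ => NCell_unique HAU _ _;
  inv2_comp := fun _ _ _ _ _ _ _ => NCell_unique HAU _ _;
  asc := fun A B C D H G F => ncell_of_eq (nhc_assoc HAU H G F);
  asc_nat := fun _ _ _ _ _ _ _ _ _ _ _ _ _ => NCell_unique HAU _ _;
  lu := fun A B F => ncell_of_eq (nhc_id1l HAU F);
  lu_nat := fun _ _ _ _ _ => NCell_unique HAU _ _;
  ru := fun A B F => ncell_of_eq (nhc_id1r HAU F);
  ru_nat := fun _ _ _ _ _ => NCell_unique HAU _ _;
  ev := fun A B F => nev F;
  ev_nat := fun _ _ _ _ _ => NCell_unique HAU _ _;
  co := fun A B F => nco HAU F;
  co_nat := fun _ _ _ _ _ => NCell_unique HAU _ _;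
  pentagon := fun _ _ _ _ _ _ _ _ _ => NCell_unique HAU _ _;
  triangle := fun _ _ _ _ _ => NCell_unique HAU _ _;
  inverse_ax := fun _ _ _ => NCell_unique HAU _ _
|}.

Lemma thin_AU : isAU thin.
Proof.
  split; [|split].
  - intros A B C D h g f. exists (nhc_assoc HAU h g f). apply NCell_unique, HAU.
  - intros A B f. exists (nhc_id1l HAU f). apply NCell_unique, HAU.
  - intros A B f. exists (nhc_id1r HAU f). apply NCell_unique, HAU.
Qed.

Lemma heq_base2_ncell_of_eq {A B : obj X} {U V : NHom A B} (p : U = V) :
  heq (base2 (ncell_of_eq p)) (vid (base1 U)).
Proof. destruct p. apply heq_refl. Qed.

Definition forget : StrictMor thin X.
Proof.
  refine (@Build_StrictMor thin X (fun A => A) (fun A B U => base1 U)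
     (fun A B U V a => base2 a) _ _ _ _ _ _ _ _ _ _ _ _);
    intros; try reflexivity; apply cell_heq_iff_heq; try apply heq_refl; simpl.
  - eapply heq_trans; [apply (heq_base2_ncell_of_eq (nhc_assoc HAU h g f)) |].
    apply heq_sym, (heq_asc HAU).
  - eapply heq_trans; [apply (heq_base2_ncell_of_eq (nhc_id1l HAU f)) |].
    apply heq_sym, (heq_lu HAU).
  - eapply heq_trans; [apply (heq_base2_ncell_of_eq (nhc_id1r HAU f)) |].
    apply heq_sym, (heq_ru HAU).
Defined.

Definition lift_graph {G : Graph} (I : GraphMor G (underlying X)) : GraphMor G (underlying thin) :=
  @Build_GraphMor G (underlying thin) (gm0 I)
    (fun a b e => MkNHom (gm1 I e) (fun Y c => to_rep (hc (gm1 I e) (rep c)))).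

Lemma forget_lift_graph {G : Graph} (I : GraphMor G (underlying X)) :
  gcomp (sm_graph forget) (lift_graph I) = I.
Proof. destruct I. reflexivity. Qed.

End ThinBigroupoid.


Lemma sm2_heq {X Y : Bigroupoid} (F : StrictMor X Y) {A B : obj X} {f g f' g' : hom X A B}
  (a : cell X f g) (b : cell X f' g') : heq a b -> heq (sm2 F a) (sm2 F b).
Proof. intros [p [q H]]. destruct p, q. subst. apply heq_refl. Qed.

Definition sm_id {X : Bigroupoid} : StrictMor X X.
Proof.
  refine (@Build_StrictMor X X (fun A => A) (fun A B f => f) (fun A B f g a => a)
    _ _ _ _ _ _ _ _ _ _ _ _); intros; try reflexivity; apply cell_heq_iff_heq, heq_refl.
Defined.

Definition sm_comp {X Y Z : Bigroupoid} (G : StrictMor Y Z) (F : StrictMor X Y)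
  : StrictMor X Z.
Proof.
  refine (@Build_StrictMor X Z (fun A => sm0 G (sm0 F A)) (fun A B f => sm1 G (sm1 F f))
    (fun A B f g a => sm2 G (sm2 F a)) _ _ _ _ _ _ _ _ _ _ _ _); intros.
  6-12: apply cell_heq_iff_heq; eapply heq_trans;
    [apply sm2_heq, cell_heq_iff_heq | apply cell_heq_iff_heq];
    first [apply sm_hc2 | apply sm_inv2 | apply sm_asc | apply sm_lu | apply sm_ru
          | apply sm_ev | apply sm_co].
  - rewrite sm_hc. apply sm_hc.
  - rewrite sm_id1. apply sm_id1.
  - rewrite sm_inv1. apply sm_inv1.
  - rewrite sm_vid. apply sm_vid.
  - rewrite sm_vcomp. apply sm_vcomp.
Defined.


Theorem theoremA19 (G : Graph) (Fa : Bigroupoid) (Ia : GraphMor G (underlying Fa))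
  (Hfree : is_free_AU_bigroupoid G Fa Ia)
  (A B : obj Fa) (u v : hom Fa A B) (x y : cell Fa u v) :
  x = y.
Proof.
  destruct Hfree as [HAU Huniv].
  destruct (Huniv (thin HAU) (thin_AU HAU) (lift_graph HAU Ia)) as [Lift [HLift _]].
  destruct (Huniv Fa HAU Ia) as [Id [_ Huniq]].
  assert (Hretract : sm_comp (forget HAU) Lift = sm_id).
  { rewrite <- (Huniq (sm_comp (forget HAU) Lift)), <- (Huniq sm_id); [reflexivity|..].
    - destruct Ia. reflexivity.
    - change (gcomp (sm_graph (forget HAU)) (gcomp (sm_graph Lift) Ia) = Ia).
      rewrite HLift. apply forget_lift_graph. }
  change (sm2 sm_id x = sm2 sm_id y). rewrite <- Hretract. simpl.
  f_equal. apply (NCell_unique HAU).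
Qed.
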